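(* Let $(X,d)$ be a complete metric space, $\lambda$ a convex mean on $X$ and $\nu$ a nonexpansive 2-mean on $X$. Then the iterated composition $\lambda*\nu$ (resp. the skewed iterated composition $\lambda*_s\nu$) exists and is nonexpansive.
   Context: A 2-mean is a map $\mu:X^2\to X$ with $\mu(x,x)=x$. A convex mean is a symmetric 2-mean $\lambda$ with $d(\lambda(x,z),\lambda(y,z))\le\frac12 d(x,y)$ for all $x,y,z$. Nonexpansive: $d(\nu(x_1,x_2),\nu(y_1,y_2))\le\max\{d(x_1,y_1),d(x_2,y_2)\}$. Iterated composition: set $\lambda_1=\lambda$, $\nu_1=\nu$, $\lambda_{n+1}(x,y)=\lambda(\lambda_n(x,y),\nu_n(x,y))$, $\nu_{n+1}(x,y)=\nu(\lambda_n(x,y),\nu_n(x,y))$; skewed iterated composition: $\nu_{n+1}(x,y)=\nu(\lambda_n(x,y),\nu_n(x,y))$, $\lambda_{n+1}(x,y)=\lambda(\lambda_n(x,y),\nu_{n+1}(x,y))$. If there is a 2-mean $\mu$ with $\lim_n\lambda_n(x,y)=\mu(x,y)=\lim_n\nu_n(x,y)$ for all $x,y$, then $\mu$ is the iterated composition $\lambda*\nu$ (resp. skewed iterated composition $\lambda*_s\nu$). *)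

From Stdlib Require Import Reals.
Open Scope R_scope.

Definition is_metric {X : Type} (d : X -> X -> R) : Prop :=
  (forall x y, 0 <= d x y) /\
  (forall x y, d x y = 0 <-> x = y) /\
  (forall x y, d x y = d y x) /\
  (forall x y z, d x z <= d x y + d y z).

Definition converges_to {X : Type} (d : X -> X -> R) (u : nat -> X) (l : X) : Prop :=
  forall eps, 0 < eps -> exists N, forall n, (N <= n)%nat -> d (u n) l < eps.

Definition cauchy_seq {X : Type} (d : X -> X -> R) (u : nat -> X) : Prop :=
  forall eps, 0 < eps -> exists N, forall m n, (N <= m)%nat -> (N <= n)%nat ->
    d (u m) (u n) < eps.

Definition complete_metric {X : Type} (d : X -> X -> R) : Prop :=
  is_metric d /\
  forall u : nat -> X, cauchy_seq d u -> exists l, converges_to d u l.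

Definition two_mean {X : Type} (mu : X -> X -> X) : Prop :=
  forall x, mu x x = x.

Definition convex_mean {X : Type} (d : X -> X -> R) (lam : X -> X -> X) : Prop :=
  two_mean lam /\
  (forall x y, lam x y = lam y x) /\
  (forall x y z, d (lam x z) (lam y z) <= / 2 * d x y).

Definition nonexpansive {X : Type} (d : X -> X -> R) (nu : X -> X -> X) : Prop :=
  forall x1 x2 y1 y2, d (nu x1 x2) (nu y1 y2) <= Rmax (d x1 y1) (d x2 y2).

(* Iterated composition: (λ_n, ν_n) with λ_1 = λ, ν_1 = ν;
   iter_pair n returns (λ_{n+1}(x,y), ν_{n+1}(x,y)). *)
Fixpoint iter_pair {X : Type} (lam nu : X -> X -> X) (n : nat) (x y : X) : X * X :=
  match n with
  | O => (lam x y, nu x y)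
  | S k => let (a, b) := iter_pair lam nu k x y in (lam a b, nu a b)
  end.

Fixpoint iter_pair_s {X : Type} (lam nu : X -> X -> X) (n : nat) (x y : X) : X * X :=
  match n with
  | O => (lam x y, nu x y)
  | S k => let (a, b) := iter_pair_s lam nu k x y in
           let b' := nu a b in (lam a b', b')
  end.

Definition is_iterated_composition {X : Type} (d : X -> X -> R)
    (lam nu mu : X -> X -> X) : Prop :=
  two_mean mu /\
  forall x y,
    converges_to d (fun n => fst (iter_pair lam nu n x y)) (mu x y) /\
    converges_to d (fun n => snd (iter_pair lam nu n x y)) (mu x y).

Definition is_skewed_iterated_composition {X : Type} (d : X -> X -> R)
    (lam nu mu : X -> X -> X) : Prop :=
  two_mean mu /\
  forall x y,
    converges_to d (fun n => fst (iter_pair_s lam nu n x y)) (mu x y) /\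
    converges_to d (fun n => snd (iter_pair_s lam nu n x y)) (mu x y).

(* Both iterations are orbits of a self-map of X * X, started at (λ(x,y), ν(x,y)),
   which fixes the diagonal, is nonexpansive for the max-distance on pairs and
   halves the gap d(a,b) of a pair (a,b), while moving the first coordinate by at
   most that gap.  The first coordinates therefore move by geometrically
   decreasing steps and converge; the second coordinates stay within the gap of
   them and converge to the same limit; and the limit inherits idempotence and
   nonexpansiveness from the orbits. *)

From Stdlib Require Import Reals.
From Stdlib Require Import Lra Lia IndefiniteDescription.
Open Scope R_scope.

Definition pair_dist {X : Type} (d : X -> X -> R) (p q : X * X) : R :=
  Rmax (d (fst p) (fst q)) (d (snd p) (snd q)).

Lemma pow_half_vanishes (C eps : R) : 0 <= C -> 0 < eps ->
  exists N, forall n, (N <= n)%nat -> C * (/2) ^ n < eps.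
Proof.
  intros HC Heps.
  assert (Hq : 0 < eps / (C + 1)) by (apply Rdiv_lt_0_compat; lra).
  destruct (pow_lt_1_zero (/2) ltac:(rewrite Rabs_pos_eq; lra) _ Hq) as [N HN].
  exists N; intros n Hn.
  specialize (HN n Hn).
  assert (Hpow : 0 <= (/2) ^ n) by (apply pow_le; lra).
  rewrite Rabs_pos_eq in HN by exact Hpow.
  assert (Heps_eq : eps = (C + 1) * (eps / (C + 1))) by (field; lra).
  nra.
Qed.

Section MetricSequences.

Variables (X : Type) (d : X -> X -> R).
Hypothesis Hd : is_metric d.

Lemma dist_nonneg x y : 0 <= d x y.
Proof. apply Hd. Qed.

Lemma dist_self x : d x x = 0.
Proof. apply Hd; reflexivity. Qed.

Lemma dist_sym x y : d x y = d y x.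
Proof. apply Hd. Qed.

Lemma dist_triangle x y z : d x z <= d x y + d y z.
Proof. apply Hd. Qed.

Lemma dist_geometric_telescope (u : nat -> X) (C : R) :
  (forall n, d (u (S n)) (u n) <= C * (/2) ^ n) ->
  forall n k, d (u (n + k)%nat) (u n) <= 2 * C * (/2) ^ n - 2 * C * (/2) ^ (n + k).
Proof.
  intros Hstep n k; induction k as [|k IH].
  - rewrite Nat.add_0_r, dist_self; lra.
  - replace (n + S k)%nat with (S (n + k)) by lia.
    pose proof (dist_triangle (u (S (n + k))) (u (n + k)%nat) (u n)).
    pose proof (Hstep (n + k)%nat).
    simpl pow in *; lra.
Qed.

Lemma cauchy_seq_geometric (u : nat -> X) (C : R) : 0 <= C ->
  (forall n, d (u (S n)) (u n) <= C * (/2) ^ n) -> cauchy_seq d u.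
Proof.
  intros HC Hstep eps Heps.
  destruct (pow_half_vanishes (2 * C) eps) as [N HN]; [lra | exact Heps |].
  assert (Hordered : forall m n, (N <= n)%nat -> (n <= m)%nat -> d (u m) (u n) < eps).
  { intros m n Hn Hnm.
    replace m with (n + (m - n))%nat by lia.
    pose proof (dist_geometric_telescope u C Hstep n (m - n)).
    assert (0 <= (/2) ^ (n + (m - n))) by (apply pow_le; lra).
    specialize (HN n Hn); nra. }
  exists N; intros m n Hm Hn.
  destruct (Nat.le_gt_cases n m).
  - now apply Hordered.
  - rewrite dist_sym; apply Hordered; lia.
Qed.

Lemma converges_to_ext (u v : nat -> X) (l : X) :
  (forall n, u n = v n) -> converges_to d u l -> converges_to d v l.
Proof.
  intros Huv Hu eps Heps; destruct (Hu eps Heps) as [N HN].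
  exists N; intros n Hn; rewrite <- Huv; exact (HN n Hn).
Qed.

Lemma converges_to_unique (u : nat -> X) (l1 l2 : X) :
  converges_to d u l1 -> converges_to d u l2 -> l1 = l2.
Proof.
  intros H1 H2; apply Hd.
  destruct (Rle_lt_dec (d l1 l2) 0) as [Hle | Hpos].
  { pose proof (dist_nonneg l1 l2); lra. }
  destruct (H1 (d l1 l2 / 2)) as [N1 HN1]; [lra |].
  destruct (H2 (d l1 l2 / 2)) as [N2 HN2]; [lra |].
  set (n := Nat.max N1 N2).
  specialize (HN1 n ltac:(lia)); specialize (HN2 n ltac:(lia)).
  pose proof (dist_triangle l1 (u n) l2).
  rewrite (dist_sym l1 (u n)) in *; lra.
Qed.

Lemma converges_to_const (x : X) : converges_to d (fun _ => x) x.
Proof. intros eps Heps; exists 0%nat; intros n _; rewrite dist_self; exact Heps. Qed.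

Lemma converges_to_geometric_close (u v : nat -> X) (l : X) (C : R) : 0 <= C ->
  (forall n, d (v n) (u n) <= C * (/2) ^ n) ->
  converges_to d u l -> converges_to d v l.
Proof.
  intros HC Hclose Hu eps Heps.
  destruct (Hu (eps / 2)) as [N1 HN1]; [lra |].
  destruct (pow_half_vanishes C (eps / 2) HC) as [N2 HN2]; [lra |].
  exists (Nat.max N1 N2); intros n Hn.
  specialize (HN1 n ltac:(lia)); specialize (HN2 n ltac:(lia)).
  pose proof (dist_triangle (v n) (u n) l).
  pose proof (Hclose n); lra.
Qed.

Lemma dist_limits_le (u v : nat -> X) (l l' : X) (c : R) :
  converges_to d u l -> converges_to d v l' ->
  (forall n, d (u n) (v n) <= c) -> d l l' <= c.
Proof.
  intros Hu Hv Hbound; apply Rle_plus_epsilon; intros eps Heps.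
  destruct (Hu (eps / 2)) as [N1 HN1]; [lra |].
  destruct (Hv (eps / 2)) as [N2 HN2]; [lra |].
  set (n := Nat.max N1 N2).
  specialize (HN1 n ltac:(lia)); specialize (HN2 n ltac:(lia)).
  pose proof (dist_triangle l (u n) l').
  pose proof (dist_triangle (u n) (v n) l').
  pose proof (Hbound n).
  rewrite (dist_sym l (u n)) in *; lra.
Qed.

End MetricSequences.

Section PairIteration.

Variables (X : Type) (d : X -> X -> R).
Hypothesis Hcomplete : complete_metric d.
Let Hd : is_metric d := proj1 Hcomplete.

Variable T : X * X -> X * X.
Hypothesis T_halves_gap : forall p, d (fst (T p)) (snd (T p)) <= / 2 * d (fst p) (snd p).
Hypothesis T_fst_moves_le_gap : forall p, d (fst (T p)) (fst p) <= d (fst p) (snd p).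
Hypothesis T_nonexpansive : forall p q, pair_dist d (T p) (T q) <= pair_dist d p q.
Hypothesis T_diag : forall x, T (x, x) = (x, x).

Lemma orbit_gap n p :
  d (fst (Nat.iter n T p)) (snd (Nat.iter n T p)) <= d (fst p) (snd p) * (/2) ^ n.
Proof.
  induction n as [|n IH]; simpl.
  - lra.
  - pose proof (T_halves_gap (Nat.iter n T p)); lra.
Qed.

Lemma orbit_converges p : exists l,
  converges_to d (fun n => fst (Nat.iter n T p)) l /\
  converges_to d (fun n => snd (Nat.iter n T p)) l.
Proof.
  set (C := d (fst p) (snd p)).
  assert (HC : 0 <= C) by apply (dist_nonneg X d Hd).
  assert (Hstep : forall n,
    d (fst (Nat.iter (S n) T p)) (fst (Nat.iter n T p)) <= C * (/2) ^ n).
  { intros n; simpl.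
    pose proof (T_fst_moves_le_gap (Nat.iter n T p)); pose proof (orbit_gap n p).
    unfold C; lra. }
  destruct (proj2 Hcomplete _ (cauchy_seq_geometric X d Hd _ C HC Hstep)) as [l Hl].
  exists l; split; [exact Hl |].
  apply (converges_to_geometric_close X d Hd (fun n => fst (Nat.iter n T p)) _ _ C HC);
    [| exact Hl].
  intros n; rewrite (dist_sym X d Hd); apply orbit_gap.
Qed.

Lemma orbit_nonexpansive n p q :
  pair_dist d (Nat.iter n T p) (Nat.iter n T q) <= pair_dist d p q.
Proof.
  induction n as [|n IH]; simpl.
  - apply Rle_refl.
  - eapply Rle_trans; [apply T_nonexpansive | exact IH].
Qed.

Lemma orbit_diag n x : Nat.iter n T (x, x) = (x, x).
Proof. induction n as [|n IH]; simpl; [| rewrite IH, T_diag]; reflexivity. Qed.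

Variable F : X * X -> X * X.
Hypothesis F_nonexpansive : forall p q, pair_dist d (F p) (F q) <= pair_dist d p q.
Hypothesis F_diag : forall x, F (x, x) = (x, x).

Theorem orbit_limit_mean (s : nat -> X -> X -> X * X) :
  (forall n x y, s n x y = Nat.iter n T (F (x, y))) ->
  exists mu,
    (two_mean mu /\
     forall x y, converges_to d (fun n => fst (s n x y)) (mu x y) /\
                 converges_to d (fun n => snd (s n x y)) (mu x y)) /\
    nonexpansive d mu.
Proof.
  intros Hs.
  destruct (functional_choice _ (fun p => orbit_converges (F p))) as [L HL].
  exists (fun x y => L (x, y)).
  split; [split |].
  - intros x; symmetry.
    apply (converges_to_unique X d Hd (fun _ => x)); [apply (converges_to_const X d Hd) |].
    apply (converges_to_ext X d (fun n => fst (Nat.iter n T (F (x, x))))).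
    + intros n; rewrite F_diag, orbit_diag; reflexivity.
    + exact (proj1 (HL (x, x))).
  - intros x y; destruct (HL (x, y)) as [Hfst Hsnd].
    split; [revert Hfst | revert Hsnd]; apply converges_to_ext; intros n; rewrite Hs; reflexivity.
  - intros x1 x2 y1 y2.
    apply (dist_limits_le X d Hd _ _ _ _ _ (proj1 (HL (x1, x2))) (proj1 (HL (y1, y2)))).
    intros n; eapply Rle_trans; [apply Rmax_l |].
    eapply Rle_trans; [apply orbit_nonexpansive | apply (F_nonexpansive (x1, x2) (y1, y2))].
Qed.

End PairIteration.

Section MeanSteps.

Variables (X : Type) (d : X -> X -> R) (lam nu : X -> X -> X).
Hypothesis Hd : is_metric d.
Hypothesis Hlam : convex_mean d lam.
Hypothesis nu_idem : two_mean nu.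
Hypothesis nu_nonexpansive : nonexpansive d nu.

Lemma convex_mean_dist_right a b : d (lam a b) b <= / 2 * d a b.
Proof.
  destruct Hlam as [lam_idem [_ lam_contr]].
  pose proof (lam_contr a b b) as H; rewrite lam_idem in H; exact H.
Qed.

Lemma convex_mean_dist_left a b : d (lam a b) a <= / 2 * d a b.
Proof.
  destruct Hlam as [_ [lam_sym _]].
  rewrite lam_sym, (dist_sym X d Hd a b); apply convex_mean_dist_right.
Qed.

Lemma convex_mean_dist a b a' b' :
  d (lam a b) (lam a' b') <= / 2 * d a a' + / 2 * d b b'.
Proof.
  destruct Hlam as [_ [lam_sym lam_contr]].
  pose proof (dist_triangle X d Hd (lam a b) (lam a' b) (lam a' b')) as Htri.
  pose proof (lam_contr a a' b) as Hfst.
  pose proof (lam_contr b b' a') as Hsnd; rewrite !(lam_sym _ a') in Hsnd.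
  lra.
Qed.

Lemma nonexpansive_mean_dist_max a b m : d (nu a b) m <= Rmax (d a m) (d b m).
Proof.
  pose proof (nu_nonexpansive a b m m) as Hne; rewrite nu_idem in Hne; exact Hne.
Qed.

Lemma nonexpansive_mean_dist_left a b : d (nu a b) a <= d a b.
Proof.
  eapply Rle_trans; [apply nonexpansive_mean_dist_max |].
  rewrite (dist_self X d Hd), (dist_sym X d Hd b a).
  apply Rmax_lub; [apply (dist_nonneg X d Hd) | apply Rle_refl].
Qed.

Definition mean_step (p : X * X) : X * X := (lam (fst p) (snd p), nu (fst p) (snd p)).

Definition skew_step (p : X * X) : X * X :=
  (lam (fst p) (nu (fst p) (snd p)), nu (fst p) (snd p)).

Lemma mean_step_halves_gap p :
  d (fst (mean_step p)) (snd (mean_step p)) <= / 2 * d (fst p) (snd p).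
Proof.
  destruct p as [a b]; simpl.
  rewrite (dist_sym X d Hd); eapply Rle_trans; [apply nonexpansive_mean_dist_max |].
  rewrite (dist_sym X d Hd a), (dist_sym X d Hd b).
  apply Rmax_lub; [apply convex_mean_dist_left | apply convex_mean_dist_right].
Qed.

Lemma mean_step_fst_moves_le_gap p : d (fst (mean_step p)) (fst p) <= d (fst p) (snd p).
Proof.
  destruct p as [a b]; simpl.
  pose proof (convex_mean_dist_left a b); pose proof (dist_nonneg X d Hd a b); lra.
Qed.

Lemma mean_step_nonexpansive p q :
  pair_dist d (mean_step p) (mean_step q) <= pair_dist d p q.
Proof.
  destruct p as [a b], q as [a' b']; unfold pair_dist; simpl.
  apply Rmax_lub; [| apply nu_nonexpansive].
  pose proof (convex_mean_dist a b a' b').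
  pose proof (Rmax_l (d a a') (d b b')); pose proof (Rmax_r (d a a') (d b b')); lra.
Qed.

Lemma mean_step_diag x : mean_step (x, x) = (x, x).
Proof. unfold mean_step; simpl; rewrite nu_idem, (proj1 Hlam); reflexivity. Qed.

Lemma skew_step_halves_gap p :
  d (fst (skew_step p)) (snd (skew_step p)) <= / 2 * d (fst p) (snd p).
Proof.
  destruct p as [a b]; simpl.
  pose proof (convex_mean_dist_right a (nu a b)).
  pose proof (nonexpansive_mean_dist_left a b).
  rewrite (dist_sym X d Hd (nu a b)) in *; lra.
Qed.

Lemma skew_step_fst_moves_le_gap p : d (fst (skew_step p)) (fst p) <= d (fst p) (snd p).
Proof.
  destruct p as [a b]; simpl.
  pose proof (convex_mean_dist_left a (nu a b)).
  pose proof (nonexpansive_mean_dist_left a b).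
  pose proof (dist_nonneg X d Hd a (nu a b)).
  rewrite (dist_sym X d Hd (nu a b)) in *; lra.
Qed.

Lemma skew_step_nonexpansive p q :
  pair_dist d (skew_step p) (skew_step q) <= pair_dist d p q.
Proof.
  destruct p as [a b], q as [a' b']; unfold pair_dist; simpl.
  pose proof (nu_nonexpansive a b a' b').
  apply Rmax_lub; [| assumption].
  pose proof (convex_mean_dist a (nu a b) a' (nu a' b')).
  pose proof (Rmax_l (d a a') (d b b')); lra.
Qed.

Lemma skew_step_diag x : skew_step (x, x) = (x, x).
Proof. unfold skew_step; simpl; rewrite nu_idem, (proj1 Hlam); reflexivity. Qed.

Lemma iter_pair_orbit n x y :
  iter_pair lam nu n x y = Nat.iter n mean_step (mean_step (x, y)).
Proof.
  induction n as [|n IH]; simpl; [reflexivity |].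
  rewrite IH; destruct (Nat.iter n _ _); reflexivity.
Qed.

Lemma iter_pair_s_orbit n x y :
  iter_pair_s lam nu n x y = Nat.iter n skew_step (mean_step (x, y)).
Proof.
  induction n as [|n IH]; simpl; [reflexivity |].
  rewrite IH; destruct (Nat.iter n _ _); reflexivity.
Qed.

End MeanSteps.

Theorem proposition6p3 (X : Type) (d : X -> X -> R) (lam nu : X -> X -> X) :
  complete_metric d -> convex_mean d lam -> two_mean nu -> nonexpansive d nu ->
  (exists mu, is_iterated_composition d lam nu mu /\ nonexpansive d mu) /\
  (exists mu, is_skewed_iterated_composition d lam nu mu /\ nonexpansive d mu).
Proof.
  intros Hcomplete Hlam nu_idem nu_nonexp.
  pose proof (proj1 Hcomplete) as Hd.
  split.
  - apply (orbit_limit_mean X d Hcomplete (mean_step X lam nu)) with (F := mean_step X lam nu).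
    all: eauto using mean_step_halves_gap, mean_step_fst_moves_le_gap,
      mean_step_nonexpansive, mean_step_diag, iter_pair_orbit.
  - apply (orbit_limit_mean X d Hcomplete (skew_step X lam nu)) with (F := mean_step X lam nu).
    all: eauto using skew_step_halves_gap, skew_step_fst_moves_le_gap, skew_step_nonexpansive,
      skew_step_diag, mean_step_nonexpansive, mean_step_diag, iter_pair_s_orbit.
Qed.
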